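(* Let $G$ be an oriented graph derived from a Burling tree $T$ and let $uv$ be a bottom arc of $G$ with respect to $T$. Let $G'$ be obtained from $G$ by subdividing $uv$ into $uwv$ (removing the arc $uv$ and adding a new vertex $w$ with arcs $uw$ and $wv$). Then $G'$ can be derived from a Burling tree $T'$ in such a way that, with respect to $T'$: $uw$ is a bottom arc of $G'$; $wv$ is both a bottom arc and a top arc of $G'$; every top arc of $G$ with respect to $T$ other than $uv$ is a top arc of $G'$; and every bottom arc of $G$ with respect to $T$ other than $uv$ is a bottom arc of $G'$.
   Context: Oriented graphs are finite, without loops, multiple arcs or pairs of opposite arcs. In a rooted tree $T$ with root $r$, each non-root vertex $v$ has a parent $p(v)$; children, leaves, ancestors and descendants are as usual. A branch is a sequence $v_1\dots v_k$ ($k\ge0$) with $v_i$ the parent of $v_{i+1}$; it starts at $v_1$. A Burling tree is a 4-tuple $(T,r,\ell,c)$: $T$ a rooted tree with root $r$; $\ell$ assigns to each non-leaf vertex $v$ one of its children $\ell(v)$ (the last-born of $v$); $c$ assigns to every vertex $v$ that is neither the root nor a last-born the vertex-set of a (possibly empty) branch starting at $\ell(p(v))$, and $c(v)=\emptyset$ if $v$ is the root or a last-born. The oriented graph fully derived from it has vertex-set $V(T)$ and an arc $uv$ iff $v\in c(u)$; an oriented graph is derived from the Burling tree if it is an induced subgraph of the fully derived one. If $G$ is derived from $T$ and $uv$ is an arc of $G$, then all out-neighbors of $u$ lie on one branch of $T$; $uv$ is a top arc with respect to $T$ if $v$ is the out-neighbor of $u$ closest in $T$ to the root, and a bottom arc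 with respect to $T$ if $v$ is the out-neighbor of $u$ furthest in $T$ from the root. *)

From mathcomp Require Import all_boot.
Set Implicit Arguments. Unset Strict Implicit. Unset Printing Implicit Defensive.

(* A Burling tree (T, r, l, c) on a finite vertex type V.
   par v = Some q  iff q is the parent of v;  par v = None iff v is the root.
   lb v = Some x   iff v is a non-leaf with last-born child x. *)
Record burling_tree (V : finType) := BurlingTree {
  bt_root : V;
  bt_par : V -> option V;
  bt_lb : V -> option V;
  bt_c : V -> {set V};
  bt_par_none : forall v, bt_par v = None <-> v = bt_root;
  bt_reach : forall v, exists n, iter n (obind bt_par) (Some v) = Some bt_root;
  bt_lb_child : forall v x, bt_lb v = Some x -> bt_par x = Some v;
  bt_lb_leaf : forall v, bt_lb v = None -> forall x, bt_par x <> Some v;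
  bt_c_trivial : forall v, (v = bt_root \/ exists y, bt_lb y = Some v) -> bt_c v = set0;
  (* otherwise c v is the vertex set of a (possibly empty) branch starting at l(p(v)) *)
  bt_c_branch : forall v q x, bt_par v = Some q -> bt_lb q = Some x -> x <> v ->
    exists s : seq V, bt_c v = [set y in s] /\
      (s = [::] \/ exists t, s = x :: t /\ path (fun a b => bt_par b == Some a) x t)
}.

Definition anc (V : finType) (T : burling_tree V) (a b : V) : Prop :=
  exists n, iter n (obind (bt_par T)) (Some b) = Some a.

(* An oriented graph with vertex type W and arc relation A is derived from T via
   the injective vertex map f: it is (isomorphic via f to) an induced subgraph of
   the graph fully derived from T (arc xy iff y in c(x)). *)
Definition derived (V W : finType) (T : burling_tree V) (A : rel W) (f : W -> V) : Prop :=
  injective f /\ forall x y, A x y = (f y \in bt_c T (f x)).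

(* uv is a top arc: v is the out-neighbour of u closest to the root
   (all out-neighbours lie on one branch, so: f v is an ancestor-or-self of all). *)
Definition top_arc (V W : finType) (T : burling_tree V) (A : rel W) (f : W -> V) (u v : W) : Prop :=
  A u v /\ forall y, A u y -> anc T (f v) (f y).

(* uv is a bottom arc: v is the out-neighbour of u furthest from the root. *)
Definition bottom_arc (V W : finType) (T : burling_tree V) (A : rel W) (f : W -> V) (u v : W) : Prop :=
  A u v /\ forall y, A u y -> anc T (f y) (f v).

(* Subdividing the arc uv into u w v; the new vertex w is None. *)
Definition subdiv (W : finType) (A : rel W) (u v : W) : rel (option W) :=
  fun x y => match x, y with
  | Some a, Some b => A a b && ((a, b) != (u, v))
  | Some a, None => a == u
  | None, Some b => b == v
  | None, None => false
  end.

From mathcomp Require Import all_boot.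
Set Implicit Arguments. Unset Strict Implicit. Unset Printing Implicit Defensive.

(* Write U = f u and X = f v. X lies on the branch c(U); let q be the parent of
   X and L the last-born of q. Build T' from T by giving q a new last-born b
   whose children are a new last-born d and a new leaf w, and by moving X and L
   from q to d, L remaining a last-born. A branch of T that goes from q to X or
   L now passes through q, b, d, so it only gains b and d, which carry no
   vertex of G'. The branch c(U) is cut just below q and continued by b, w:
   since v was the bottom out-neighbour of u, u keeps all its other
   out-neighbours and w is now its lowest one. Setting c(w) = {d, X} makes v the
   only out-neighbour of w. Ancestry in T implies ancestry in T', so all other
   top and bottom arcs survive. *)

Section Reach.
Variables (A : Type) (g : A -> option A).

Definition reach (a b : A) : Prop := exists n, iter n (obind g) (Some b) = Some a.

Lemma iter_obind_None n : iter n (obind g) None = None.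
Proof. by elim: n => //= n ->. Qed.

Lemma reach_refl a : reach a a.
Proof. by exists 0. Qed.

Lemma reach_step a b : g b = Some a -> reach a b.
Proof. by exists 1. Qed.

Lemma reach_trans a b c : reach a b -> reach b c -> reach a c.
Proof. by move=> [n up_b] [m up_c]; exists (n + m); rewrite iterD up_c. Qed.

Lemma reach_strict a b : reach a b -> a <> b -> exists2 p, g b = Some p & reach a p.
Proof.
move=> [[|n] up_b] ab; first by case: ab; case: up_b.
move: up_b; rewrite iterSr /=; case: (g b) => [p|] up_p; first by exists p; [|exists n].
by rewrite iter_obind_None in up_p.
Qed.

End Reach.

(* [anc T] unfolds to [reach (bt_par T)], so the lemmas above apply to it. *)

Definition par_rel (A : eqType) (g : A -> option A) : rel A := fun a b => g b == Some a.

Definition is_branch (A : finType) (g : A -> option A) (x : A) (C : {set A}) : Prop :=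
  exists s, C = [set y in s] /\ (s = [::] \/ exists t, s = x :: t /\ path (par_rel g) x t).

Section BurlingTreeFacts.
Variables (V : finType) (T : burling_tree V).
Local Notation par := (bt_par T).

Lemma bt_par_root : par (bt_root T) = None.
Proof. exact/(bt_par_none T). Qed.

Lemma not_anc_par x p : par x = Some p -> ~ anc T x p.
Proof.
move=> par_x [n up_p]; have [m up_m] := bt_reach T x.
have : iter (m + n.+1) (obind par) (Some x) = Some (bt_root T).
  by rewrite iterD iterSr /= par_x up_p.
by rewrite addnC iterD up_m iterSr /= bt_par_root iter_obind_None.
Qed.

Lemma anc_antisym a b : anc T a b -> anc T b a -> a = b.
Proof.
move=> anc_ab anc_ba; apply/eqP/negPn/negP => /eqP ab.
have [p par_b anc_ap] := reach_strict anc_ab ab.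
exact: not_anc_par par_b (reach_trans anc_ba anc_ap).
Qed.

Lemma mem_path_anc_par x t y :
  path (par_rel par) x t -> y \in t -> exists2 p, par y = Some p & anc T x p.
Proof.
elim: t x => //= y0 t IH x /andP[/eqP par_y0 path_t].
rewrite inE => /predU1P[->|y_t]; first by exists x; last exact: reach_refl.
have [p par_y anc_p] := IH _ path_t y_t.
by exists p; last exact: reach_trans (reach_step par_y0) anc_p.
Qed.

Lemma path_notin_head x t : path (par_rel par) x t -> x \notin t.
Proof.
move=> path_t; apply/negP => /(mem_path_anc_par path_t)[p par_x anc_p].
exact: not_anc_par par_x anc_p.
Qed.

Lemma mem_take_index_anc x t X y :
  path (par_rel par) x t -> X \in x :: t -> y \in x :: t -> y != X -> anc T y X ->
  y \in take (index X (x :: t)) (x :: t).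
Proof.
elim: t x => [|x' t IH] x path_t X_in y_in yX anc_yX.
  by move: X_in y_in yX; rewrite !inE => /eqP-> /eqP->; rewrite eqxx.
have [xX|xX] := eqVneq x X.
  subst X; move: y_in; rewrite in_cons (negbTE yX) => y_t.
  have [p par_y anc_p] := mem_path_anc_par path_t y_t.
  by case: (not_anc_par par_y); apply: reach_trans anc_yX anc_p.
have -> : index X (x :: x' :: t) = (index X (x' :: t)).+1 by rewrite /= (negbTE xX).
set i := index X (x' :: t); rewrite /= inE; have [//|yx] := eqVneq y x.
rewrite in_cons eq_sym (negbTE xX) in X_in; rewrite in_cons (negbTE yx) in y_in.
by move: path_t => /andP[_ path_t]; apply: IH.
Qed.

Lemma bt_lb_parent x p : par x = Some p -> exists y, bt_lb T p = Some y.
Proof.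
move=> par_x; case lb_p: (bt_lb T p) => [y|]; first by exists y.
by case: (bt_lb_leaf lb_p par_x).
Qed.

Lemma bt_c_last_born p x : bt_lb T p = Some x -> bt_c T x = set0.
Proof. by move=> lb_p; apply: bt_c_trivial; right; exists p. Qed.

Lemma mem_bt_c_branch y z : y \in bt_c T z ->
  exists p x t, [/\ par z = Some p, bt_lb T p = Some x, x <> z,
                    bt_c T z = [set w in x :: t] & path (par_rel par) x t].
Proof.
move=> y_in; have c_n0 : bt_c T z != set0 by apply/set0Pn; exists y.
case par_z: (par z) => [p|]; last first.
  move/(bt_par_none T): par_z => z_root.
  by rewrite (bt_c_trivial (or_introl z_root)) eqxx in c_n0.
have [x lb_p] := bt_lb_parent par_z.
have xz : x <> z by move=> xz; rewrite -xz (bt_c_last_born lb_p) eqxx in c_n0.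
have [s [cz [s0|[t [s_xt path_t]]]]] := bt_c_branch par_z lb_p xz.
  by move: y_in; rewrite cz s0 inE.
by exists p, x, t; rewrite cz s_xt.
Qed.

Lemma mem_bt_c_par y z : y \in bt_c T z -> exists p, par y = Some p.
Proof.
move=> y_in; have [p [x [t [_ lb_p _ cz path_t]]]] := mem_bt_c_branch y_in.
move: y_in; rewrite cz inE => /predU1P[->|y_t]; first by exists p; apply: bt_lb_child lb_p.
by have [p' par_y _] := mem_path_anc_par path_t y_t; exists p'.
Qed.

Lemma bt_c_irr z : z \notin bt_c T z.
Proof.
apply/negP => z_in; have [p [x [t [par_z lb_p xz cz path_t]]]] := mem_bt_c_branch z_in.
move: z_in; rewrite cz inE => /predU1P[zx|z_t]; first exact: xz.
have [p' par_z' anc_xp'] := mem_path_anc_par path_t z_t.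
move: par_z'; rewrite par_z => -[p_p']; rewrite -p_p' in anc_xp'.
exact: not_anc_par (bt_lb_child lb_p) anc_xp'.
Qed.

End BurlingTreeFacts.

Section Subdivision.
Variables (V : finType) (T : burling_tree V) (U pU x1 X q L : V) (tU : seq V).
Hypotheses (par_U : bt_par T U = Some pU) (lb_pU : bt_lb T pU = Some x1)
  (cU : bt_c T U = [set y in x1 :: tU]) (path_tU : path (par_rel (bt_par T)) x1 tU)
  (X_in_cU : X \in bt_c T U) (par_X : bt_par T X = Some q) (lb_q : bt_lb T q = Some L).

Let par_L : bt_par T L = Some q := bt_lb_child lb_q.

Let U_neq_X : (U == X) = false.
Proof.
by apply/negbTE/eqP => UX; move: X_in_cU; rewrite -UX (negbTE (bt_c_irr T U)).
Qed.

Let X_in_sU : X \in x1 :: tU.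
Proof. by move: X_in_cU; rewrite cU inE. Qed.

Let par_XL z p : (z == X) || (z == L) -> bt_par T z = Some p -> p = q.
Proof. by case/orP=> /eqP->; rewrite ?par_X ?par_L => -[]. Qed.

(* The vertices of T' are [old z] for z in T and the new vertices [bv], [dv], [wv]
   (b, d, w above). *)
Local Notation old z := (Some (Some (Some z))).
Local Notation wv := (Some (Some None)).
Local Notation dv := (Some None).
Local Notation bv := None.
Local Notation V' := (option (option (option V))).

Let old_inj : injective (fun y : V => old y : V').
Proof. by move=> a b []. Qed.

Definition sd_par (x : V') : option V' :=
  match x with
  | old z => if (z == X) || (z == L) then Some dv else omap (fun y => old y) (bt_par T z)
  | wv => Some bv
  | dv => Some bv
  | bv => Some (old q)
  end.

Definition sd_lb (x : V') : option V' :=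
  match x with
  | old z => if z == q then Some bv else omap (fun y => old y) (bt_lb T z)
  | wv => None
  | dv => Some (old L)
  | bv => Some dv
  end.

Definition lift_vertex (y : V) : seq V' :=
  if (y == X) || (y == L) then [:: bv; dv; old y] else [:: old y].

Definition lift_branch (s : seq V) : seq V' := flatten (map lift_vertex s).

Definition sd_c (x : V') : {set V'} :=
  match x with
  | old z =>
      if z == U then [set y in lift_branch (take (index X (x1 :: tU)) (x1 :: tU)) ++ [:: bv; wv]]
      else if z == X then [set old y | y in bt_c T X]
      else [set old y | y in bt_c T z] :|:
           (if (X \in bt_c T z) || (L \in bt_c T z) then [set bv; dv] else set0)
  | wv => [set dv; old X]
  | _ => set0
  end.

Lemma reach_sd_par_old z p : bt_par T z = Some p -> reach sd_par (old p) (old z).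
Proof.
move=> par_z; have [zXL|zXL] := boolP ((z == X) || (z == L)).
  rewrite (par_XL zXL par_z).
  apply: reach_trans (reach_step (_ : sd_par bv = _)) _ => //.
  apply: reach_trans (reach_step (_ : sd_par dv = _)) _ => //.
  by apply: reach_step; rewrite /= zXL.
by apply: reach_step; rewrite /= (negbTE zXL) par_z.
Qed.

Lemma reach_sd_old a b : anc T a b -> reach sd_par (old a) (old b).
Proof.
move=> [n]; elim: n b => [|n IH] b; first by move=> [->]; apply: reach_refl.
rewrite iterSr /=; case par_b: (bt_par T b) => [p|]; last by rewrite iter_obind_None.
by move=> up_p; apply: reach_trans (IH _ up_p) (reach_sd_par_old par_b).
Qed.

Lemma reach_sd_wv Y : anc T Y X -> Y <> X -> reach sd_par (old Y) wv.
Proof.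
move=> anc_YX YX; have [p] := reach_strict anc_YX YX; rewrite par_X => -[<-] anc_Yq.
apply: reach_trans (reach_sd_old anc_Yq) _.
exact: reach_trans (reach_step (_ : sd_par bv = _)) (reach_step (_ : sd_par wv = _)).
Qed.

Lemma sd_par_none x : sd_par x = None <-> x = old (bt_root T).
Proof.
case: x => [[[z|]|]|] /=; try by split.
case: ifP => [zXL|_].
  split=> // -[z_root]; move: (bt_par_root T); rewrite -z_root.
  by case/orP: zXL => /eqP->; rewrite ?par_X ?par_L.
case par_z: (bt_par T z) => [p|] /=.
  by split=> // -[z_root]; rewrite z_root bt_par_root in par_z.
by split=> // _; move/(bt_par_none T): par_z => ->.
Qed.

Lemma sd_reach x : reach sd_par (old (bt_root T)) x.
Proof.
have reach_old z : reach sd_par (old (bt_root T)) (old z).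
  exact: reach_sd_old (bt_reach T z).
have reach_bv : reach sd_par (old (bt_root T)) bv.
  exact: reach_trans (reach_old q) (reach_step (erefl : sd_par bv = Some (old q))).
case: x => [[[z|]|]|]; [exact: reach_old | | | exact: reach_bv];
  exact: reach_trans reach_bv (reach_step _).
Qed.

Lemma sd_lb_child x y : sd_lb x = Some y -> sd_par y = Some x.
Proof.
case: x => [[[z|]|]|] //=; last 2 first.
- by move=> [<-] /=; rewrite eqxx orbT.
- by move=> [<-].
have [->|zq] := eqVneq z q; first by move=> [<-].
case lb_z: (bt_lb T z) => [x|] //= [<-] /=.
have par_x := bt_lb_child lb_z; case: ifP => [xXL|_]; last by rewrite par_x.
by rewrite (par_XL xXL par_x) eqxx in zq.
Qed.

Lemma sd_lb_leaf x : sd_lb x = None -> forall y, sd_par y <> Some x.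
Proof.
case: x => [[[z|]|]|] //= lb_x y.
  move: lb_x; have [//|zq] := eqVneq z q; case lb_z: (bt_lb T z) => // _.
  case: y => [[[y|]|]|] //=; last by move=> [qz]; rewrite qz eqxx in zq.
  case: ifP => // _; case par_y: (bt_par T y) => [p|] //= [pz].
  by apply: (bt_lb_leaf lb_z (x:=y)); rewrite par_y pz.
by case: y => [[[y|]|]|] //=; case: ifP => // _; case: (bt_par T y).
Qed.

Lemma sd_c_old_set0 z : bt_c T z = set0 -> sd_c (old z) = set0.
Proof.
move=> cz; have zU : (z == U) = false.
  by apply/negbTE/eqP => zU; move: X_in_cU; rewrite -zU cz inE.
by rewrite /= zU; case: ifP => [/eqP <-|_]; rewrite cz imset0 // !inE /= set0U.
Qed.

Lemma sd_c_trivial x :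
  x = old (bt_root T) \/ (exists y, sd_lb y = Some x) -> sd_c x = set0.
Proof.
case=> [->|[y]]; first by apply/sd_c_old_set0/bt_c_trivial; left.
case: y => [[[z|]|]|] //=.
- case: eqP => [_ [<-] //|_]; case lb_z: (bt_lb T z) => [y|] //= [<-].
  exact/sd_c_old_set0/(bt_c_last_born lb_z).
- by move=> [<-]; apply/sd_c_old_set0/(bt_c_last_born lb_q).
- by move=> [<-].
Qed.

Lemma lift_branch_cons y s : lift_branch (y :: s) = lift_vertex y ++ lift_branch s.
Proof. by []. Qed.

Lemma mem_imset_old (S : {set V}) (x : V') :
  (x \in [set old y | y in S]) = if x is old z then z \in S else false.
Proof.
case: x => [[[z|]|]|]; first by rewrite (mem_imset _ _ old_inj).
all: by apply/imsetP => -[].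
Qed.

Lemma mem_lift_old z s : (old z \in lift_branch s) = (z \in s).
Proof.
elim: s => // y s IH; rewrite lift_branch_cons mem_cat IH /lift_vertex inE.
by case: ifP => _; rewrite !inE.
Qed.

Lemma mem_lift_wv s : (wv \in lift_branch s) = false.
Proof.
elim: s => // y s IH; rewrite lift_branch_cons mem_cat IH /lift_vertex.
by case: ifP => _; rewrite !inE.
Qed.

Lemma mem_lift_new x s :
  x \in [:: bv; dv] -> (x \in lift_branch s) = (X \in s) || (L \in s).
Proof.
case: x => [[[z|]|]|] // _; elim: s => // y s IH;
  rewrite lift_branch_cons mem_cat IH /lift_vertex !inE;
  by case: ifP => [/orP[]/eqP->|/negbT/norP[]/negbTE Xy /negbTE Ly];
     rewrite ?eqxx ?orbT // eq_sym Xy eq_sym Ly.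
Qed.

Lemma set_lift_branch (S : {set V}) s : S = [set y in s] ->
  [set y in lift_branch s] =
    [set old y | y in S] :|: (if (X \in S) || (L \in S) then [set bv; dv] else set0).
Proof.
move=> ->; apply/setP => x; rewrite !inE mem_imset_old.
case: x => [[[z|]|]|]; rewrite ?mem_lift_old ?mem_lift_wv ?mem_lift_new ?inE //;
  by case: ifP; rewrite ?inE ?orbF.
Qed.

Lemma set_map_old (S : {set V}) s : S = [set y in s] ->
  [set old y | y in S] = [set y in map (fun y => old y) s].
Proof.
move=> ->; apply/setP => x; rewrite mem_imset_old inE.
case: x => [[[z|]|]|]; first by rewrite (mem_map old_inj) inE.
all: by apply/esym/mapP => -[].
Qed.

Lemma lift_branch_old s : X \notin s -> L \notin s -> lift_branch s = map (fun y => old y) s.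
Proof.
elim: s => // y s IH; rewrite !inE !negb_or => /andP[Xy Xs] /andP[Ly Ls].
by rewrite lift_branch_cons IH // /lift_vertex eq_sym (negbTE Xy) eq_sym (negbTE Ly).
Qed.

Lemma lift_branch_path x t :
  path (par_rel (bt_par T)) x t -> path (par_rel sd_par) (old x) (lift_branch t).
Proof.
elim: t x => // y t IH x /andP[/eqP par_y path_t].
rewrite lift_branch_cons cat_path /lift_vertex; case: ifP => yXL /=.
  by rewrite (par_XL yXL par_y) /par_rel /= yXL !eqxx IH.
by rewrite /par_rel /= yXL par_y eqxx IH.
Qed.

Lemma last_lift_branch y0 x t : last y0 (lift_branch (x :: t)) = old (last x t).
Proof.
elim: t x y0 => [|y t IH] x y0; last by rewrite lift_branch_cons last_cat IH.
by rewrite lift_branch_cons cats0 /lift_vertex; case: ifP.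
Qed.

Lemma lift_branch_head p x t y :
  bt_lb T p = Some x -> sd_lb (old p) = Some y -> path (par_rel (bt_par T)) x t ->
  exists t', [/\ lift_branch (x :: t) = y :: t', path (par_rel sd_par) y t'
               & last y t' = old (last x t)].
Proof.
move=> lb_p lb'_p path_t; have par_x := bt_lb_child lb_p.
have last_t : last (old x) (lift_branch t) = old (last x t).
  by case: t path_t => // y' t _; rewrite last_lift_branch.
rewrite lift_branch_cons /lift_vertex; case: ifP => xXL.
  move: lb'_p; rewrite (par_XL xXL par_x) /= eqxx => -[<-].
  exists [:: dv, old x & lift_branch t]; split => //.
  by rewrite /= /par_rel /= xXL !eqxx lift_branch_path.
have pq : p != q.
  apply: contraFN xXL => /eqP pq.
  by move: lb_p; rewrite pq lb_q => -[->]; rewrite eqxx orbT.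
move: lb'_p; rewrite /= (negbTE pq) lb_p => -[<-].
by exists (lift_branch t); split => //; apply: lift_branch_path.
Qed.

Lemma sd_c_branch_X : is_branch sd_par (old L) (sd_c (old X)).
Proof.
rewrite /= eq_sym U_neq_X eqxx.
have [s [cX s_branch]] : is_branch (bt_par T) L (bt_c T X).
  have [XL|XL] := eqVneq X L; last exact: bt_c_branch par_X lb_q (nesym (elimN eqP XL)).
  by exists [::]; split; [apply/setP => y; rewrite XL (bt_c_last_born lb_q) !inE | left].
exists (map (fun y => old y) s); split; first exact: set_map_old cX.
case: s_branch => [->|[t [-> path_t]]]; [by left | right].
exists (map (fun y => old y) t); split => //.
rewrite -lift_branch_old; first exact: lift_branch_path.
  apply/negP => /(mem_path_anc_par path_t)[p]; rewrite par_X => -[<-].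
  exact: not_anc_par par_L.
exact: path_notin_head path_t.
Qed.

Lemma sd_c_branch_U x : sd_lb (old pU) = Some x -> is_branch sd_par x (sd_c (old U)).
Proof.
move=> lb'_pU; rewrite /= eqxx.
exists (lift_branch (take (index X (x1 :: tU)) (x1 :: tU)) ++ [:: bv; wv]).
split => //; right.
have [x1X|x1X] := eqVneq x1 X.
  have pUq : pU = q by move: (bt_lb_child lb_pU); rewrite x1X par_X => -[->].
  move: lb'_pU; rewrite pUq /= eqxx => -[<-].
  by rewrite x1X /= eqxx; exists [:: wv].
have X_in_tU : X \in tU by move: X_in_sU; rewrite in_cons eq_sym (negbTE x1X).
have -> : take (index X (x1 :: tU)) (x1 :: tU) = x1 :: take (index X tU) tU.
  by rewrite /= (negbTE x1X).
have last_q : last x1 (take (index X tU) tU) = q.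
  have := path_tU; rewrite -[tU in path _ _ tU](cat_take_drop (index X tU)).
  rewrite (drop_nth X) ?index_mem //.
  rewrite nth_index // cat_path /= => /and3P[_ /eqP par_X' _].
  by move: par_X'; rewrite par_X => -[->].
have [t' [-> path_t' last_t']] :=
  lift_branch_head lb_pU lb'_pU (take_path (index X tU) path_tU).
exists (t' ++ [:: bv; wv]); split => //.
by rewrite cat_path path_t' last_t' last_q /= /par_rel /= !eqxx.
Qed.

Lemma sd_c_branch_other z p x : ~~ ((z == X) || (z == L)) -> z != U ->
  bt_par T z = Some p -> sd_lb (old p) = Some x -> x <> old z ->
  is_branch sd_par x (sd_c (old z)).
Proof.
move=> zXL zU par_z lb'_p xz; move: (zXL); rewrite negb_or => /andP[zX zL].
have [y [lb_p yz]] : exists y, bt_lb T p = Some y /\ y <> z.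
  have [pq|pq] := eqVneq p q.
    by exists L; rewrite pq; split => // Lz; rewrite Lz eqxx in zL.
  move: lb'_p; rewrite /= (negbTE pq); case: (bt_lb T p) => [y|] //= [y_x].
  by exists y; split => // yz; apply: xz; rewrite -y_x yz.
have [s [cz s_branch]] := bt_c_branch par_z lb_p yz.
exists (lift_branch s); split.
  by rewrite /= (negbTE zU) (negbTE zX) (set_lift_branch cz).
case: s_branch => [->|[t [-> path_t]]]; [by left | right].
by have [t' [-> path_t' _]] := lift_branch_head lb_p lb'_p path_t; exists t'.
Qed.

Lemma sd_c_branch x p y :
  sd_par x = Some p -> sd_lb p = Some y -> y <> x -> is_branch sd_par y (sd_c x).
Proof.
case: x => [[[z|]|]|]; last 3 first.
- move=> [<-] [<-] _; exists [:: dv; old X]; split; first by apply/setP => x; rewrite !inE.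
  by right; exists [:: old X]; rewrite /= /par_rel /= eqxx.
- by move=> [<-] [<-].
- by move=> [<-] /=; rewrite eqxx => -[<-].
rewrite [sd_par _]/=; case: ifP => [zXL [<-] [<-] Lz | zXL].
  have -> : z = X by case/orP: zXL => /eqP // zL; case: Lz; rewrite zL.
  exact: sd_c_branch_X.
case par_z: (bt_par T z) => [p0|] // [<-] lb'_p0 yz.
have [zU|zU] := eqVneq z U; last exact: sd_c_branch_other (negbT zXL) zU par_z lb'_p0 yz.
by move: par_z lb'_p0; rewrite zU par_U => -[<-]; apply: sd_c_branch_U.
Qed.

Definition sd_tree : burling_tree V' :=
  BurlingTree sd_par_none sd_reach sd_lb_child sd_lb_leaf sd_c_trivial sd_c_branch.

Lemma mem_sd_c_old z y : z != U -> (old y \in sd_c (old z)) = (y \in bt_c T z).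
Proof.
move=> zU; rewrite /= (negbTE zU); case: ifP => [/eqP->|_]; first by rewrite mem_imset_old.
by rewrite inE mem_imset_old; case: ifP; rewrite ?inE ?orbF.
Qed.

Lemma mem_sd_c_wv z : (wv \in sd_c (old z)) = (z == U).
Proof.
rewrite /=; case: eqP => [_|_]; first by rewrite inE mem_cat !inE orbT.
by case: ifP => _; rewrite ?inE mem_imset_old //; case: ifP; rewrite ?inE.
Qed.

Lemma mem_sd_c_U y :
  (old y \in sd_c (old U)) = (y \in take (index X (x1 :: tU)) (x1 :: tU)).
Proof. by rewrite /= eqxx inE mem_cat mem_lift_old !inE orbF. Qed.

Section Graph.
Variables (W : finType) (A : rel W) (f : W -> V) (u v : W).
Hypotheses (f_inj : injective f) (A_c : forall a b, A a b = (f b \in bt_c T (f a))).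
Hypotheses (A_uv : A u v) (bot_v : forall b, A u b -> anc T (f b) (f v)).
Hypotheses (fu : f u = U) (fv : f v = X).

Definition sd_map (o : option W) : V' := if o is Some w then old (f w) else wv.

Lemma out_u_strict_anc b : A u b -> b != v -> anc T (f b) X /\ f b <> X.
Proof.
move=> A_ub b_v; split; first by rewrite -fv; apply: bot_v.
by rewrite -fv => /f_inj bv_eq; rewrite bv_eq eqxx in b_v.
Qed.

Lemma mem_take_out_u b :
  (f b \in take (index X (x1 :: tU)) (x1 :: tU)) = A u b && (b != v).
Proof.
apply/idP/andP => [b_take | [A_ub b_v]].
  split; first by rewrite A_c fu cU inE (mem_take b_take).
  by apply: contraTneq b_take => ->; rewrite fv (in_take _ X_in_sU) ltnn.
have [anc_bX bX] := out_u_strict_anc A_ub b_v.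
apply: mem_take_index_anc path_tU X_in_sU _ _ anc_bX; last exact/eqP.
by move: A_ub; rewrite A_c fu cU inE.
Qed.

Lemma sd_derived : derived sd_tree (subdiv A u v) sd_map.
Proof.
split=> [[a|] [b|] //= [/f_inj ->] // | [a|] [b|] /=].
- have [->|au] := eqVneq a u.
    by rewrite fu mem_sd_c_U mem_take_out_u xpair_eqE eqxx.
  have fa_U : f a != U by rewrite -fu (inj_eq f_inj).
  by rewrite xpair_eqE (negbTE au) andbT mem_sd_c_old // A_c.
- by rewrite mem_sd_c_wv -fu (inj_eq f_inj).
- by rewrite !inE /= -fv (inj_eq old_inj) (inj_eq f_inj).
- by rewrite !inE.
Qed.

Lemma sd_bottom_uw : bottom_arc sd_tree (subdiv A u v) sd_map (Some u) None.
Proof.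
split=> [|[b|] /=]; [by rewrite /= eqxx | | by move=> _; apply: reach_refl].
rewrite xpair_eqE eqxx => /andP[A_ub b_v].
by have [anc_bX bX] := out_u_strict_anc A_ub b_v; apply: reach_sd_wv.
Qed.

Lemma sd_top_bottom_wv :
  top_arc sd_tree (subdiv A u v) sd_map None (Some v) /\
  bottom_arc sd_tree (subdiv A u v) sd_map None (Some v).
Proof.
have arc_wv : subdiv A u v None (Some v) by rewrite /= eqxx.
by split; split=> // -[b /eqP->|] //; apply: reach_refl.
Qed.

Lemma sd_top_arc x y : top_arc T A f x y -> (x, y) <> (u, v) ->
  top_arc sd_tree (subdiv A u v) sd_map (Some x) (Some y).
Proof.
move=> [A_xy top_y] xy_uv; split=> [|[b|] /=]; first by rewrite /= A_xy; apply/eqP.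
  by move=> /andP[/top_y anc_yb _]; apply: reach_sd_old.
move=> /eqP xu; subst x; have y_v : y != v by apply/eqP => yv; apply: xy_uv; rewrite yv.
by have [anc_yX yX] := out_u_strict_anc A_xy y_v; apply: reach_sd_wv.
Qed.

Lemma sd_bottom_arc x y : bottom_arc T A f x y -> (x, y) <> (u, v) ->
  bottom_arc sd_tree (subdiv A u v) sd_map (Some x) (Some y).
Proof.
move=> [A_xy bot_y] xy_uv; split=> [|[b|] /=]; first by rewrite /= A_xy; apply/eqP.
  by move=> /andP[/bot_y anc_by _]; apply: reach_sd_old.
move=> /eqP xu; subst x; case: xy_uv; congr pair.
by apply: f_inj; apply: anc_antisym (bot_v A_xy) (bot_y v A_uv).
Qed.

End Graph.

End Subdivision.

Theorem lemma3p6 (V W : finType) (T : burling_tree V) (A : rel W) (f : W -> V) (u v : W) :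
  derived T A f -> bottom_arc T A f u v ->
  exists (V' : finType) (T' : burling_tree V') (f' : option W -> V'),
    derived T' (subdiv A u v) f' /\
    bottom_arc T' (subdiv A u v) f' (Some u) None /\
    bottom_arc T' (subdiv A u v) f' None (Some v) /\
    top_arc T' (subdiv A u v) f' None (Some v) /\
    (forall x y, top_arc T A f x y -> (x, y) <> (u, v) ->
       top_arc T' (subdiv A u v) f' (Some x) (Some y)) /\
    (forall x y, bottom_arc T A f x y -> (x, y) <> (u, v) ->
       bottom_arc T' (subdiv A u v) f' (Some x) (Some y)).
Proof.
move=> [f_inj A_c] [A_uv bot_v].
have X_in_cU : f v \in bt_c T (f u) by rewrite -A_c.
have [pU [x1 [tU [par_U lb_pU _ cU path_tU]]]] := mem_bt_c_branch X_in_cU.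
have [q par_X] := mem_bt_c_par X_in_cU.
have [L lb_q] := bt_lb_parent par_X.
pose T' := sd_tree par_U lb_pU cU path_tU X_in_cU par_X lb_q.
have [top_wv bot_wv] := sd_top_bottom_wv par_U lb_pU cU path_tU X_in_cU par_X lb_q A f u v.
exists _, T', (sd_map f); split; first exact: sd_derived.
split; first exact: sd_bottom_uw.
do 2 (split=> //).
by split=> x y; [apply: sd_top_arc | apply: sd_bottom_arc].
Qed.
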